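(* Let $G$ be a well-bicovered graph with a clique $C$ and let $H$ be a well-bicovered graph (disjoint from $G$) with a clique $D$, where $|C|=|D|=k$. Let $F$ be the graph formed from the disjoint union of $G$ and $H$ by adding $k$ vertex-disjoint paths, each joining a vertex of $C$ to a vertex of $D$ (so that the paths pair up $C$ and $D$ bijectively), with interior vertices new, such that all the added paths have lengths of the same parity. Then $F$ is well-bicovered.
   Context: All graphs are finite and simple; ''subgraph'' means induced subgraph. A graph is well-bicovered if every vertex-inclusion-maximal induced bipartite subgraph has the same order. *)

From mathcomp Require Import all_boot.
Set Implicit Arguments. Unset Strict Implicit. Unset Printing Implicit Defensive.

Definition simple_graph (T : finType) (e : rel T) : Prop :=
  symmetric e /\ irreflexive e.

Definition independent (T : finType) (e : rel T) (S : {set T}) : bool :=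
  [forall x in S, forall y in S, ~~ e x y].

Definition bipartite_set (T : finType) (e : rel T) (S : {set T}) : bool :=
  [exists A : {set T}, (A \subset S) && independent e A && independent e (S :\: A)].

Definition well_bicovered (T : finType) (e : rel T) : Prop :=
  forall S1 S2 : {set T},
    maxset (bipartite_set e) S1 -> maxset (bipartite_set e) S2 -> #|S1| = #|S2|.

(* The graph F: vertices of G, vertices of H, and for each i < k the
   (len i).-1 interior vertices of the i-th path.  Path i is
   c i -- (i,0) -- (i,1) -- ... -- (i,(len i).-2) -- d i, of length len i
   (if len i = 1 it is the single edge c i -- d i). *)
Section Glue.
Variables (TG TH : finType) (eG : rel TG) (eH : rel TH) (k : nat)
  (c : 'I_k -> TG) (d : 'I_k -> TH) (len : 'I_k -> nat).

Definition inner_t := {i : 'I_k & 'I_(len i).-1}.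
Definition glue_vert := (TG + TH + inner_t)%type.

Definition glue_edge0 (x y : glue_vert) : bool :=
  match x, y with
  | inl (inl u), inl (inl v) => eG u v
  | inl (inr u), inl (inr v) => eH u v
  | inl (inl u), inl (inr w) => [exists i, (len i == 1) && (u == c i) && (w == d i)]
  | inl (inl u), inr p => (u == c (tag p)) && (val (tagged p) == 0)
  | inl (inr w), inr p => (w == d (tag p)) && ((val (tagged p)).+1 == (len (tag p)).-1)
  | inr p, inr q => (tag p == tag q) && ((val (tagged p)).+1 == val (tagged q))
  | _, _ => false
  end.

Definition glue_edge : rel glue_vert := fun x y => glue_edge0 x y || glue_edge0 y x.

End Glue.
Arguments glue_edge [TG TH] eG eH [k] c d len _ _.

(* Given 2-colourings of induced bipartite subgraphs A of G and B of H, colour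
   every added path alternately from an end that is kept.  A path with both
   ends kept only forces the relative colouring of A and B; since A and B meet
   the cliques C and D in at most two (differently coloured) vertices and all
   paths have the same parity, flipping the colouring of B if necessary meets
   all these constraints at once.  So every maximal induced bipartite subgraph
   of F contains all the interior vertices of the paths, and its traces on G
   and on H are maximal there; its order is therefore
   |A| + |B| + #(interior vertices) with A, B maximal in G, H. *)

From mathcomp Require Import all_boot.
Set Implicit Arguments. Unset Strict Implicit. Unset Printing Implicit Defensive.

Definition proper_coloring (T : finType) (e : rel T) (S : {set T}) (col : T -> bool) :=
  {in S &, forall x y, e x y -> col x != col y}.

Lemma independentP (T : finType) (e : rel T) (S : {set T}) :
  reflect {in S &, forall x y, ~~ e x y} (independent e S).
Proof.
apply: (iffP forallP) => [iS x y xS yS | iS x].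
  by have /implyP/(_ xS)/forallP/(_ y)/implyP := iS x; apply.
by apply/implyP => xS; apply/forallP => y; apply/implyP; apply: iS.
Qed.

Lemma bipartite_setP (T : finType) (e : rel T) (S : {set T}) :
  reflect (exists col, proper_coloring e S col) (bipartite_set e S).
Proof.
apply: (iffP existsP) => [[A /andP[/andP[sAS /independentP iA] /independentP iSA]] |
                          [col pcol]].
  exists (mem A) => x y xS yS exy /=.
  case xA: (x \in A); case yA: (y \in A) => //.
    by rewrite (negbTE (iA x y xA yA)) in exy.
  have [xSA ySA] : x \in S :\: A /\ y \in S :\: A by rewrite !inE xA yA.
  by rewrite (negbTE (iSA x y xSA ySA)) in exy.
exists [set x in S | col x]; rewrite -andbA; apply/and3P; split.
- by apply/subsetP => x; rewrite inE => /andP[].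
- apply/independentP => x y; rewrite !inE.
  by move=> /andP[xS cx] /andP[yS cy]; apply/negP => /(pcol x y xS yS); rewrite cx cy.
- apply/independentP => x y; rewrite !inE.
  move=> /andP[cx xS] /andP[cy yS]; apply/negP => /(pcol x y xS yS).
  by rewrite xS yS /= in cx cy; rewrite (negbTE cx) (negbTE cy).
Qed.

Lemma proper_coloring_addb (T : finType) (e : rel T) (S : {set T}) col b :
  proper_coloring e S col -> proper_coloring e S (fun x => col x (+) b).
Proof. by move=> pcol x y xS yS /(pcol x y xS yS); case: b (col x) (col y) => [] [] []. Qed.

Lemma odd_succ_pred t n : t.+1 = n.-1 -> odd n = odd t.
Proof. by case: n => [|[|n]] //= [->]; rewrite negbK. Qed.

Section Glue.
Variables (TG TH : finType) (eG : rel TG) (eH : rel TH) (k : nat)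
  (c : 'I_k -> TG) (d : 'I_k -> TH) (len : 'I_k -> nat).
Hypothesis cliqueC : forall i j : 'I_k, i != j -> eG (c i) (c j).
Hypothesis cliqueD : forall i j : 'I_k, i != j -> eH (d i) (d j).
Hypothesis len_parity : forall i j : 'I_k, odd (len i) = odd (len j).

Local Notation V := (glue_vert TG TH len).
Local Notation F := (glue_edge eG eH c d len).

Definition glue_set (A : {set TG}) (B : {set TH}) : {set V} :=
  [set x : V | match x with
               | inl (inl u) => u \in A
               | inl (inr w) => w \in B
               | inr _ => true
               end].

Definition partG (S : {set V}) : {set TG} := [set u | inl (inl u) \in S].
Definition partH (S : {set V}) : {set TH} := [set w | inl (inr w) \in S].

Lemma partG_glue_set A B : partG (glue_set A B) = A.
Proof. by apply/setP => u; rewrite !inE. Qed.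

Lemma partH_glue_set A B : partH (glue_set A B) = B.
Proof. by apply/setP => w; rewrite !inE. Qed.

Lemma sub_glue_set_parts (S : {set V}) : S \subset glue_set (partG S) (partH S).
Proof. by apply/subsetP => [[[u|w]|p]] xS; rewrite !inE. Qed.

Lemma card_glue_set A B : #|glue_set A B| = #|A| + #|B| + #|{: inner_t len}|.
Proof.
rewrite -!sum1_card !big_sumType.
by congr (_ + _ + _); apply: eq_bigl => x; rewrite !inE.
Qed.

Lemma bipartite_partG (S : {set V}) : bipartite_set F S -> bipartite_set eG (partG S).
Proof.
move=> /bipartite_setP[col pcol]; apply/bipartite_setP.
exists (fun u => col (inl (inl u))) => u v; rewrite !inE => uS vS euv.
by apply: pcol => //; rewrite /glue_edge /= euv.
Qed.

Lemma bipartite_partH (S : {set V}) : bipartite_set F S -> bipartite_set eH (partH S).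
Proof.
move=> /bipartite_setP[col pcol]; apply/bipartite_setP.
exists (fun w => col (inl (inr w))) => w z; rewrite !inE => wS zS ewz.
by apply: pcol => //; rewrite /glue_edge /= ewz.
Qed.

Section Coloring.
Variables (A : {set TG}) (B : {set TH}) (colA : TG -> bool) (colB : TH -> bool).
Hypothesis colA_proper : proper_coloring eG A colA.
Hypothesis colB_proper : proper_coloring eH B colB.

Lemma exists_flip : exists b, forall i, c i \in A -> d i \in B ->
  colB (d i) (+) b = colA (c i) (+) odd (len i).
Proof.
case: (pickP [pred i | (c i \in A) && (d i \in B)]) => [i /andP[ciA diB] | none];
  last by exists false => i ciA diB; have := none i; rewrite /= ciA diB.
exists (colB (d i) (+) colA (c i) (+) odd (len i)) => j cjA djB.
have [-> | nji] := eqVneq j i; first by case: (colB _) (colA _) (odd _) => [] [] [].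
have := colA_proper cjA ciA (cliqueC nji); have := colB_proper djB diB (cliqueD nji).
by rewrite (len_parity j i); case: (colB (d j)) (colB (d i)) (colA (c j)) (colA (c i))
  (odd (len i)) => [] [] [] [] [].
Qed.

Hypothesis colAB_agree : forall i, c i \in A -> d i \in B ->
  colB (d i) = colA (c i) (+) odd (len i).

(* The path i is coloured alternately from c i if c i is kept, else from d i;
   its interior vertex (i, t) is at distance t.+1 from c i. *)
Definition path_color (i : 'I_k) : bool :=
  if c i \in A then ~~ colA (c i) else ~~ colB (d i) (+) odd (len i).

Definition glue_color (x : V) : bool :=
  match x with
  | inl (inl u) => colA u
  | inl (inr w) => colB w
  | inr p => path_color (tag p) (+) odd (val (tagged p))
  end.

Lemma glue_color_proper0 x y : x \in glue_set A B -> y \in glue_set A B ->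
  glue_edge0 eG eH c d x y -> glue_color x != glue_color y.
Proof.
case: x y => [[u|w]|p] [[v|z]|q]; rewrite !inE //=.
- exact: colA_proper.
- move=> uA zB /existsP[i /andP[/andP[/eqP len1 /eqP eu] /eqP ez]]; subst u z.
  by rewrite colAB_agree // len1; case: (colA _).
- move=> uA _ /andP[/eqP eu /eqP t0]; subst u.
  by rewrite /path_color uA t0; case: (colA _).
- exact: colB_proper.
- move=> wB _ /andP[/eqP ew /eqP /odd_succ_pred tlast]; subst w.
  rewrite /path_color tlast; case: ifP => [cA | _].
    by rewrite colAB_agree // tlast; case: (colA _) (odd _) => [] [].
  by case: (colB _) (odd _) => [] [].
- move=> _ _ /andP[/eqP same_path /eqP <-]; rewrite -same_path /=.
  by case: (path_color _) (odd _) => [] [].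
Qed.

Lemma glue_color_proper : proper_coloring F (glue_set A B) glue_color.
Proof.
move=> x y xS yS /orP[exy | eyx]; first exact: glue_color_proper0.
by rewrite eq_sym; apply: glue_color_proper0.
Qed.

End Coloring.

Lemma bipartite_glue_set A B :
  bipartite_set eG A -> bipartite_set eH B -> bipartite_set F (glue_set A B).
Proof.
move=> /bipartite_setP[colA pA] /bipartite_setP[colB pB].
have [b agree] := exists_flip pA pB.
apply/bipartite_setP; exists (glue_color A colA (fun w => colB w (+) b)).
by apply: glue_color_proper => //; apply: proper_coloring_addb.
Qed.

Section Maximal.
Variable S : {set V}.
Hypothesis maxS : maxset (bipartite_set F) S.

Lemma maxset_glue_set_parts : S = glue_set (partG S) (partH S).
Proof.
have [bipS maxsub] := maxsetP maxS.
apply/esym/maxsub; last exact: sub_glue_set_parts.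
by apply: bipartite_glue_set; [exact: bipartite_partG bipS | exact: bipartite_partH bipS].
Qed.

Lemma maxset_partG : maxset (bipartite_set eG) (partG S).
Proof.
have [bipS maxsub] := maxsetP maxS.
apply/maxsetP; split=> [|A bipA sSA]; first exact: bipartite_partG bipS.
suff <- : glue_set A (partH S) = S by rewrite partG_glue_set.
apply: maxsub; first exact: bipartite_glue_set bipA (bipartite_partH bipS).
apply/subsetP => [[[u|w]|p]] xS; rewrite !inE //.
by apply: (subsetP sSA); rewrite inE.
Qed.

Lemma maxset_partH : maxset (bipartite_set eH) (partH S).
Proof.
have [bipS maxsub] := maxsetP maxS.
apply/maxsetP; split=> [|B bipB sSB]; first exact: bipartite_partH bipS.
suff <- : glue_set (partG S) B = S by rewrite partH_glue_set.
apply: maxsub; first exact: bipartite_glue_set (bipartite_partG bipS) bipB.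
apply/subsetP => [[[u|w]|p]] xS; rewrite !inE //.
by apply: (subsetP sSB); rewrite inE.
Qed.

End Maximal.

Lemma well_bicovered_glue : well_bicovered eG -> well_bicovered eH -> well_bicovered F.
Proof.
move=> wbG wbH S1 S2 max1 max2.
rewrite (maxset_glue_set_parts max1) (maxset_glue_set_parts max2) !card_glue_set.
by rewrite (wbG _ _ (maxset_partG max1) (maxset_partG max2))
           (wbH _ _ (maxset_partH max1) (maxset_partH max2)).
Qed.

End Glue.

Theorem mainTheorem11 (TG TH : finType) (eG : rel TG) (eH : rel TH) (k : nat)
  (c : 'I_k -> TG) (d : 'I_k -> TH) (len : 'I_k -> nat) :
  simple_graph eG -> simple_graph eH ->
  well_bicovered eG -> well_bicovered eH ->
  injective c -> injective d ->
  (forall i j : 'I_k, i != j -> eG (c i) (c j)) ->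
  (forall i j : 'I_k, i != j -> eH (d i) (d j)) ->
  (forall i : 'I_k, 0 < len i) ->
  (forall i j : 'I_k, odd (len i) = odd (len j)) ->
  well_bicovered (glue_edge eG eH c d len).
Proof.
move=> _ _ wbG wbH _ _ cliqueC cliqueD _ len_parity.
exact: well_bicovered_glue.
Qed.
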